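(* Let $k\geq2$ be an integer and let $(f(n))_{n\geq0}$ be a $k$-regular sequence over a field $\mathcal{S}\subseteq\mathbb{A}$ (the real algebraic numbers), with matrices $F_0,\dots,F_{k-1}$ of a minimal linear representation of it. Set $F(n)=F_{n_0}\cdots F_{n_{s-1}}$ for $(n)_k=n_{s-1}\cdots n_0$. Let $\sigma\in\mathbb{R}$, $\ell\in\mathbb{N}_0$, and $h(n)=n^\sigma(\log n)^\ell$. Then $f(n)\in O(h(n))$ if and only if $F(n)\in O(h(n))$. In particular, $(f(n))_{n\geq0}$ and $(F(n))_{n\geq0}$ have exactly the same growth rate.
   Context: For $n\in\mathbb{N}_0$, $(n)_k=n_{s-1}\cdots n_0$ is the standard base-$k$ representation of $n$ (no leading zeros; $(0)_k$ empty). A linear representation of $(f(n))_{n\geq0}$ consists of $r\geq0$, a $1\times r$ row vector $\lambda$, an $r\times1$ column vector $\gamma$ and $r\times r$ matrices $F_0,\dots,F_{k-1}$ over $\mathcal{S}$ with $f(n)=\lambda F_{n_0}\cdots F_{n_{s-1}}\gamma$ for all $n$; $f$ is $k$-regular if it has one, and the representation is minimal if $r$ is smallest possible for $f$. $f(n)\in O(g(n))$ means there exist $n_0$, $c>0$ with $|f(n)|\leq c\,g(n)$ for $n\geq n_0$; a sequence of matrices is in $O(g(n))$ if each entry sequence (fixed row and column) is, equivalently if the sequence of norms is. A sequence has exact growth $n^\sigma(\log n)^\ell$ if it is in $O(n^\sigma(\log n)^\ell)$ but not in $O(n^{\sigma'}(\log n)^{\ell'})$ for any $\sigma'\in\mathbb{R},\ell'\in\mathbb{N}_0$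 with $(\sigma',\ell')$ lexicographically smaller than $(\sigma,\ell)$. *)

From HB Require Import structures.
From mathcomp Require Import all_boot all_order all_algebra.
From mathcomp Require Import all_classical all_reals all_analysis.
Set Implicit Arguments. Unset Strict Implicit. Unset Printing Implicit Defensive.
Import Order.TTheory GRing.Theory Num.Theory.
Local Open Scope ring_scope.

Section Defs.
Variable R : realType.

Definition algebraic (x : R) : Prop :=
  exists p : {poly rat}, p != 0 /\ root (map_poly ratr p) x.

Definition is_subfield (S : pred R) : Prop :=
  [/\ 0 \in S, 1 \in S,
      (forall x y, x \in S -> y \in S -> x - y \in S),
      (forall x y, x \in S -> y \in S -> x * y \in S) &
      (forall x, x \in S -> x != 0 -> x^-1 \in S)].

Definition subfield_of_real_algebraic (S : pred R) : Prop :=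
  is_subfield S /\ forall x, x \in S -> algebraic x.

(* base-k digits of n, least significant first: (n)_k = n_{s-1}...n_0 is
   returned as [:: n_0; ...; n_{s-1}]; empty for n = 0 *)
Fixpoint digits_aux (fuel k n : nat) : seq nat :=
  match fuel with
  | 0 => [::]
  | fuel'.+1 => if n == 0%N then [::] else (n %% k)%N :: digits_aux fuel' k (n %/ k)
  end.
Definition digits (k n : nat) : seq nat := digits_aux n k n.

Definition Fmat (r : nat) (Fs : nat -> 'M[R]_r) (k n : nat) : 'M[R]_r :=
  foldr (fun d M => Fs d *m M) 1%:M (digits k n).

Definition is_linrep (S : pred R) (k : nat) (f : nat -> R) (r : nat)
  (lam : 'rV[R]_r) (gam : 'cV[R]_r) (Fs : nat -> 'M[R]_r) : Prop :=
  [/\ (forall j, lam 0 j \in S), (forall i, gam i 0 \in S),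
      (forall d, (d < k)%N -> forall i j, Fs d i j \in S) &
      (forall n, f n = (lam *m Fmat Fs k n *m gam) 0 0)].

Definition is_k_regular (S : pred R) (k : nat) (f : nat -> R) : Prop :=
  exists r lam gam Fs, @is_linrep S k f r lam gam Fs.

Definition is_minimal_linrep (S : pred R) (k : nat) (f : nat -> R) (r : nat)
  (lam : 'rV[R]_r) (gam : 'cV[R]_r) (Fs : nat -> 'M[R]_r) : Prop :=
  is_linrep S k f lam gam Fs /\
  forall r' (lam' : 'rV[R]_r') gam' Fs', is_linrep S k f lam' gam' Fs' -> (r <= r')%N.

Definition hfun (sigma : R) (ell : nat) (n : nat) : R :=
  (n%:R `^ sigma) * (ln (n%:R)) ^+ ell.

Definition inO (g h : nat -> R) : Prop :=
  exists n0 : nat, exists c : R, 0 < c /\ forall n, (n0 <= n)%N -> `|g n| <= c * h n.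

Definition inO_mx (m p : nat) (G : nat -> 'M[R]_(m, p)) (h : nat -> R) : Prop :=
  forall i j, inO (fun n => G n i j) h.

Definition exact_growth (O : (nat -> R) -> Prop) (sigma : R) (ell : nat) : Prop :=
  O (hfun sigma ell) /\
  forall (sigma' : R) (ell' : nat),
    (sigma' < sigma \/ (sigma' = sigma /\ (ell' < ell)%N)) -> ~ O (hfun sigma' ell').

End Defs.

(* Minimality forces the row vectors [lam F(w)], w ranging over the words on
   {0, ..., k-1}, to span the whole row space, and the column vectors
   [F(m) gam] to span the whole column space: a basis extracted from either
   family has entries in S, hence a right inverse with entries in S, and
   restricting to a proper span would give a smaller linear representation
   over S.  With such bases B and C, every entry of F(n) is a fixed linear
   combination of the numbers [lam F(w_a) F(n) F(m_b) gam = f(N(n))], where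
   the base-k expansion of N(n) is the concatenation of w_a, (n)_k and
   (m_b)_k.  As n <= N(n) <= c n and h(c n) = O(h(n)), the bound f = O(h)
   transfers to F; the converse is immediate from f(n) = lam F(n) gam. *)

From HB Require Import structures.
From mathcomp Require Import all_boot all_order all_algebra.
From mathcomp Require Import all_classical all_reals all_analysis.
From mathcomp Require Import zify.
Set Implicit Arguments. Unset Strict Implicit. Unset Printing Implicit Defensive.
Import Order.TTheory GRing.Theory Num.Theory.
Local Open Scope ring_scope.

Section Digits.
Variable k : nat.
Hypothesis k2 : (2 <= k)%N.

Definition kword (w : seq nat) : bool := all (fun d => d < k)%N w.

Definition undigits (w : seq nat) : nat := foldr (fun d acc => d + k * acc)%N 0%N w.

Lemma k_gt0 : (0 < k)%N. Proof. exact: leq_trans k2. Qed.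

Lemma digits_aux_fuel fuel1 fuel2 n : (n <= fuel1)%N -> (n <= fuel2)%N ->
  digits_aux fuel1 k n = digits_aux fuel2 k n.
Proof.
elim: fuel1 fuel2 n => [|fuel1 IH] [|fuel2] n //=; rewrite ?leqn0.
- by move/eqP->.
- by move=> _ /eqP->.
case: eqP => // /eqP n0 n_le1 n_le2; congr (_ :: _).
have lt_div m : (n <= m.+1)%N -> (n %/ k <= m)%N.
  by move=> le_n; rewrite -ltnS (leq_trans _ le_n) // ltn_Pdiv ?lt0n.
by apply: IH; apply: lt_div.
Qed.

Lemma digits_cons n : (0 < n)%N -> digits k n = (n %% k)%N :: digits k (n %/ k).
Proof.
case: n => // n _; rewrite /digits /=; congr (_ :: _).
by apply: digits_aux_fuel => //; rewrite -ltnS ltn_Pdiv.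
Qed.

Lemma kword_digits n : kword (digits k n).
Proof.
elim/ltn_ind: n => -[|n] IH //.
by rewrite digits_cons //= ltn_mod k_gt0 IH // ltn_Pdiv.
Qed.

Lemma digitsK : cancel (digits k) undigits.
Proof.
elim/ltn_ind=> -[|n] IH //.
by rewrite digits_cons //= IH ?ltn_Pdiv // mulnC addnC -divn_eq.
Qed.

Lemma undigits_cat u v :
  undigits (u ++ v) = (undigits u + k ^ size u * undigits v)%N.
Proof. by elim: u => [|d u IH] /=; rewrite ?mul1n // IH expnS; lia. Qed.

Lemma undigits_lt w : kword w -> (undigits w < k ^ size w)%N.
Proof.
elim: w => [|d w IH] //= /andP[dk /IH lt_w].
by rewrite expnS; nia.
Qed.

Lemma undigits_leq_cat u v : (undigits v <= undigits (u ++ v))%N.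
Proof. by rewrite undigits_cat; have := expn_gt0 k (size u); rewrite k_gt0; nia. Qed.

Lemma undigits_leq_catl u v : (undigits u <= undigits (u ++ v))%N.
Proof. by rewrite undigits_cat leq_addr. Qed.

Lemma expn_size_digits n : (0 < n)%N -> (k ^ size (digits k n) <= k * n)%N.
Proof.
elim/ltn_ind: n => n IH n_gt0; rewrite digits_cons //= expnS leq_mul2l.
have [->|q_gt0] := posnP (n %/ k); first by rewrite n_gt0 orbT.
by rewrite (leq_trans (IH _ _ q_gt0)) ?orbT // ?ltn_Pdiv // mulnC leq_divM.
Qed.

Lemma digits_add_mul d m : (d < k)%N -> (0 < d + k * m)%N ->
  digits k (d + k * m) = d :: digits k m.
Proof.
move=> dk pos; rewrite digits_cons // addnC mulnC modnMDl divnMDl ?k_gt0 //.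
by rewrite modn_small // divn_small // addn0.
Qed.

Lemma digits_undigits_cat u v : kword u -> digits k (undigits v) = v ->
  (0 < undigits v)%N -> digits k (undigits (u ++ v)) = u ++ v.
Proof.
move=> + vK v_gt0; elim: u => [|d u IH] //= /andP[dk /IH uvK].
rewrite digits_add_mul ?uvK // addn_gt0 muln_gt0 k_gt0 /=.
by apply/orP; right; apply: leq_trans v_gt0 (undigits_leq_cat _ _).
Qed.

Lemma digits_undigits_cat_digits w n m : kword w -> (0 < n)%N ->
  digits k (undigits (w ++ digits k n ++ digits k m)) = w ++ digits k n ++ digits k m.
Proof.
move=> kw n_gt0; have lt_n v : (0 < undigits (digits k n ++ v))%N.
  by rewrite (leq_trans n_gt0) // -{1}(digitsK n) undigits_leq_catl.
apply: digits_undigits_cat => //; have [->|m_gt0] := posnP m.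
  by rewrite cats0 digitsK.
by rewrite digits_undigits_cat ?kword_digits ?digitsK.
Qed.

Lemma undigits_cat_digits_bounds u n v : kword u -> kword v -> (0 < n)%N ->
  (n <= undigits (u ++ digits k n ++ v) <= k ^ (size u + size v).+1 * n)%N.
Proof.
move=> ku kv n_gt0; apply/andP; split.
  rewrite (leq_trans _ (undigits_leq_cat _ _)) //.
  by rewrite -{1}(digitsK n) undigits_leq_catl.
have kw : kword (u ++ digits k n ++ v).
  by rewrite /kword !all_cat -!/(kword _) ku kv kword_digits.
rewrite ltnW // (leq_trans (undigits_lt kw)) // !size_cat !expnD.
have := expn_size_digits n_gt0; rewrite -addn1 !expnD expn1.
set K := (k ^ size u)%N; set V := (k ^ size v)%N; set D := (k ^ size (digits k n))%N.
nia.
Qed.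

End Digits.

Section Words.
Context {R : ringType} {r : nat} (A : nat -> 'M[R]_r).

Definition Fword (w : seq nat) : 'M[R]_r := foldr (fun d M => A d *m M) 1%:M w.

Lemma Fword_cat u v : Fword (u ++ v) = Fword u *m Fword v.
Proof. by elim: u => [|d u IH] /=; rewrite ?mul1mx // IH mulmxA. Qed.

End Words.

Section BigO.
Variables (R : realType) (sigma : R) (ell : nat).
Local Notation h := (hfun sigma ell).

Lemma hfun_ge0 n : (0 < n)%N -> 0 <= h n.
Proof.
move=> n_gt0; rewrite /hfun mulr_ge0 ?powR_ge0 // exprn_ge0 // ln_ge0 //.
by rewrite ler1n.
Qed.

Lemma hfun_le_scaled (C n m : nat) : (0 < n)%N -> (C <= n)%N -> (n <= m <= C * n)%N ->
  h m <= (C%:R `^ `|sigma| * 2 ^+ ell) * h n.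
Proof.
move=> n_gt0 Cn /andP[nm mC].
have n1 : 1 <= n%:R :> R by rewrite ler1n.
have n0 : 0 < n%:R :> R by rewrite ltr0n.
set x : R := m%:R / n%:R.
have x1 : 1 <= x by rewrite ler_pdivlMr // mul1r ler_nat.
have xC : x <= C%:R by rewrite ler_pdivrMr // -natrM ler_nat.
have x0 : 0 < x by apply: lt_le_trans x1.
have C0 : 0 < C%:R :> R by apply: lt_le_trans xC.
have mE : m%:R = x * n%:R :> R by rewrite divfK // gt_eqF.
have pow_x : x `^ sigma <= C%:R `^ `|sigma|.
  rewrite (le_trans (ler_powR _ (ler_norm _))) //.
  by apply: ge0_ler_powR => //; rewrite nnegrE ltW.
(* [ln x <= ln C <= ln n] *)
have ln_xn : ln (x * n%:R) <= 2 * ln (n%:R : R).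
  rewrite lnM ?posrE // mulr2n mulrDl mul1r lerD2r.
  by rewrite (@le_trans _ _ (ln C%:R)) ?ler_ln ?posrE ?ler_nat.
have ln_n0 : 0 <= ln (n%:R : R) by apply: ln_ge0.
have ln_xn0 : 0 <= ln (x * n%:R) by apply/ln_ge0/mulr_ege1.
rewrite /hfun mE (powRM _ (ltW x0) (ltW n0)) mulrACA.
rewrite ler_pM ?mulr_ge0 ?powR_ge0 ?exprn_ge0 ?ler_wpM2r ?powR_ge0 //.
by rewrite -exprMn lerXn2r ?nnegrE ?mulr_ge0.
Qed.

Lemma eq_inO (n1 : nat) (g1 g2 : nat -> R) :
  (forall n, (n1 <= n)%N -> g1 n = g2 n) -> inO g1 h -> inO g2 h.
Proof.
move=> E [n0 [c [c0 H]]]; exists (maxn n0 n1), c; split => // n.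
by rewrite geq_max => /andP[n0n n1n]; rewrite -E // H.
Qed.

Lemma inO0 : inO (fun _ => 0) h.
Proof. by exists 1%N, 1; split => // n n_gt0; rewrite normr0 mul1r hfun_ge0. Qed.

Lemma inOD {g1 g2 : nat -> R} :
  inO g1 h -> inO g2 h -> inO (fun n => g1 n + g2 n) h.
Proof.
move=> [n1 [c1 [c1_gt0 H1]]] [n2 [c2 [c2_gt0 H2]]].
exists (maxn n1 n2), (c1 + c2); split; first exact: addr_gt0.
move=> n; rewrite geq_max => /andP[n1n n2n].
by rewrite (le_trans (ler_normD _ _)) // mulrDl lerD ?H1 ?H2.
Qed.

Lemma inOZ (a : R) {g : nat -> R} : inO g h -> inO (fun n => a * g n) h.
Proof.
move=> [n0 [c [c_gt0 H]]]; exists n0, ((`|a| + 1) * c); split.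
  by rewrite mulr_gt0 // ltr_wpDl.
move=> n /H gn; have chn : 0 <= c * h n by apply: le_trans gn.
rewrite normrM -mulrA (le_trans (ler_wpM2l (normr_ge0 a) gn)) //.
by rewrite ler_wpM2r // lerDl.
Qed.

Lemma inO_sum (I : Type) (s : seq I) (P : pred I) (G : I -> nat -> R) :
  (forall i, inO (G i) h) -> inO (fun n => \sum_(i <- s | P i) G i n) h.
Proof.
move=> HG; elim: s => [|i s IH].
  by apply: (eq_inO (n1 := 0) _ inO0) => n _; rewrite big_nil.
case Pi: (P i).
  by apply: (eq_inO (n1 := 0) _ (inOD (HG i) IH)) => n _; rewrite big_cons Pi.
by apply: (eq_inO (n1 := 0) _ IH) => n _; rewrite big_cons Pi.
Qed.

Lemma inO_comp (g : nat -> R) (N : nat -> nat) (C : nat) :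
  (forall n, (0 < n)%N -> (n <= N n <= C * n)%N) ->
  inO g h -> inO (fun n => g (N n)) h.
Proof.
move=> HN [n0 [c [c_gt0 H]]].
have C_gt0 : (0 < C)%N by have /andP[] := HN 1%N isT; rewrite muln1; apply: leq_trans.
exists (maxn (maxn n0 C) 1), (c * (C%:R `^ `|sigma| * 2 ^+ ell)); split.
  by rewrite !mulr_gt0 ?exprn_gt0 // powR_gt0 // ltr0n.
move=> n; rewrite !geq_max => /andP[/andP[n0n Cn] n_gt0].
have /andP[nN NC] := HN n n_gt0.
apply: (le_trans (H _ (leq_trans n0n nN))); rewrite -mulrA ler_wpM2l ?(ltW c_gt0) //.
by apply: hfun_le_scaled => //; rewrite nN.
Qed.

Lemma inO_mx_mul m p q s (L : 'M[R]_(m, p)) (G : nat -> 'M[R]_(p, q)) (M : 'M[R]_(q, s)) :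
  inO_mx G h -> inO_mx (fun n => L *m G n *m M) h.
Proof.
move=> HG i j; apply: (eq_inO (n1 := 0) (g1 := fun n =>
  \sum_(b < q) \sum_(a < p) M b j * (L i a * G n a b))).
  move=> n _; rewrite mxE; apply: eq_bigr => b _; rewrite mxE big_distrl /=.
  by apply: eq_bigr => a _; rewrite mulrC.
by apply: inO_sum => b; apply: inO_sum => a; apply/inOZ/inOZ/HG.
Qed.

End BigO.

Lemma exact_growth_iff (R : realType) (O1 O2 : (nat -> R) -> Prop) sigma ell :
  (forall sigma' ell', O1 (hfun sigma' ell') <-> O2 (hfun sigma' ell')) ->
  exact_growth O1 sigma ell <-> exact_growth O2 sigma ell.
Proof.
by move=> O12; split=> -[Oh Onot]; split=> [|s' l' /Onot]; rewrite ?O12 in Oh *.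
Qed.

Lemma mxOver_det (R : comRingType) (S : subringClosed R) n (A : 'M[R]_n) :
  A \is a mxOver S -> \det A \in S.
Proof.
move=> /mxOverP AS; rewrite rpred_sum // => s _.
by rewrite rpredM ?rpredX ?rpredN1 // rpred_prod.
Qed.

Lemma mxOver_invmx (R : comUnitRingType) (S : divringClosed R) n (A : 'M[R]_n) :
  A \is a mxOver S -> invmx A \is a mxOver S.
Proof.
move=> AS; rewrite /invmx; case: ifP => // _; apply/mxOverP => i j.
rewrite !mxE rpredM ?rpredV ?mxOver_det // /cofactor rpredM ?rpredX ?rpredN1 //.
by apply/mxOver_det/mxOverP => a b; rewrite !mxE (mxOverP AS).
Qed.

Lemma mxOver_trmx (R : Type) (S : {pred R}) m n (A : 'M[R]_(m, n)) :
  (A^T \is a mxOver S) = (A \is a mxOver S).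
Proof.
by apply/mxOverP/mxOverP => AS i j; [have := AS j i | ]; rewrite ?mxE.
Qed.

(* Invert a nonsingular maximal square block of columns of [B]. *)
Lemma row_free_mxOver_rinv (F : fieldType) (S : divringClosed F) m n (B : 'M[F]_(m, n)) :
  row_free B -> B \is a mxOver S ->
  exists2 P : 'M[F]_(n, m), P \is a mxOver S & B *m P = 1%:M.
Proof.
move=> freeB BS; have fullBt : row_full B^T by rewrite /row_full mxrank_tr.
set g := fullrankfun fullBt; set Bg := (rowsub g B^T)^T.
have Bg_unit : Bg \in unitmx by rewrite unitmx_tr fullrowsub_unit.
exists ((rowsub g 1%:M)^T *m invmx Bg); last first.
  have BgE : B *m (rowsub g 1%:M)^T = Bg by rewrite /Bg [in RHS]rowsubE trmx_mul trmxK.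
  by rewrite mulmxA BgE mulmxV.
rewrite mxOverM ?mxOver_invmx // mxOver_trmx; apply/mxOverP => i j; rewrite !mxE.
  by case: eqP; rewrite ?rpred0 ?rpred1.
by rewrite (mxOverP BS).
Qed.

Lemma mulmx_entry (R : ringType) m n p q (A : 'M[R]_(m, n)) (M : 'M[R]_(n, p))
    (B : 'M[R]_(p, q)) i j :
  (A *m M *m B) i j = (row i A *m M *m col j B) 0 0.
Proof. by rewrite colE !mulmxA -!row_mul -colE !mxE. Qed.

Section SpanBasis.
Variable F : fieldType.

Lemma row_free_col_mx t n (B : 'M[F]_(t, n)) (x : 'rV_n) :
  row_free B -> ~~ (x <= B)%MS -> row_free (col_mx B x).
Proof.
move=> freeB xB; have lt_rank : (\rank B < \rank (B + x)%MS)%N.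
  by rewrite rank_ltmx // ltmxE addsmxSl; apply: contra xB; apply: submx_trans (addsmxSr B x).
by rewrite -row_leq_rank -addsmxE addn1 (leq_trans _ lt_rank) // (eqP freeB).
Qed.

Lemma exists_row_basis n (gen : 'rV[F]_n -> Prop) :
  exists s (B : 'M[F]_(s, n)),
    [/\ row_free B, forall i, gen (row i B) & forall x, gen x -> (x <= B)%MS].
Proof.
suff ext d t (B : 'M[F]_(t, n)) : (n - t)%N = d -> row_free B ->
    (forall i, gen (row i B)) -> exists s (B' : 'M[F]_(s, n)),
    [/\ row_free B', forall i, gen (row i B') & forall x, gen x -> (x <= B')%MS].
  by apply: (ext _ 0%N 0) => //; [rewrite /row_free mxrank0 | case].
elim/ltn_ind: d t B => d IH t B dE freeB genB.
have [spanB|] := pselect (forall x, gen x -> (x <= B)%MS); first by exists t, B.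
move=> /existsNP[x /not_implyP[genx /negP xB]].
have freeBx : row_free (col_mx B x) by apply: row_free_col_mx.
have tn : (t + 1 <= n)%N by rewrite -(eqP freeBx) rank_leq_col.
apply: (IH (n - (t + 1))%N _ _ (col_mx B x) erefl freeBx); first by rewrite -dE; lia.
by move=> i; case: (split_ordP i) => j ->; rewrite ?rowKu ?rowKd ?row_id.
Qed.

End SpanBasis.

Section FmatDigits.
Context {R : realType} {r : nat} (k : nat) (A : nat -> 'M[R]_r).

Lemma Fmat_Fword n : Fmat A k n = Fword A (digits k n).
Proof. by []. Qed.

Lemma Fmat_cons n : (2 <= k)%N -> (0 < n)%N ->
  Fmat A k n = A (n %% k)%N *m Fmat A k (n %/ k).
Proof. by move=> k2 n_gt0; rewrite !Fmat_Fword digits_cons. Qed.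

End FmatDigits.

Section MinimalRepresentation.
Variables (R : realType) (S : pred R).
Hypothesis subfieldS : is_subfield S.

Lemma is_subfield_divring_closed : divring_closed S.
Proof.
case: subfieldS => S0 S1 SB SM SV; split => // x y xS yS.
have [->|y0] := eqVneq y 0; first by rewrite invr0 mulr0.
by rewrite SM ?SV.
Qed.

HB.instance Definition _ := GRing.isDivringClosed.Build R S is_subfield_divring_closed.

Variables (k : nat) (f : nat -> R) (r : nat).
Variables (lam : 'rV[R]_r) (gam : 'cV[R]_r) (Fs : nat -> 'M[R]_r).
Hypotheses (k2 : (2 <= k)%N) (rep : is_linrep S k f lam gam Fs).

Let lamS : lam \is a mxOver S.
Proof. by case: rep => lam_in _ _ _; apply/mxOverP => i j; rewrite (ord1 i). Qed.

Let gamS : gam \is a mxOver S.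
Proof. by case: rep => _ gam_in _ _; apply/mxOverP => i j; rewrite (ord1 j). Qed.

Let fE n : f n = (lam *m Fmat Fs k n *m gam) 0 0.
Proof. by case: rep. Qed.

Lemma Fword_mxOver w : kword k w -> Fword Fs w \is a mxOver S.
Proof.
case: rep => _ _ FsS _; elim: w => [|d w IH] /=.
  by rewrite mxOver_scalar ?rpred0 ?rpred1.
by case/andP=> dk /IH wS; rewrite mxOverM //; apply/mxOverP; apply: FsS.
Qed.

Lemma linrep_row_restrict s (B : 'M[R]_(s, r)) (P : 'M[R]_(r, s)) :
  B \is a mxOver S -> P \is a mxOver S -> B *m P = 1%:M ->
  (forall w, kword k w -> (lam *m Fword Fs w <= B)%MS) ->
  is_linrep S k f (lam *m P) (B *m gam) (fun d => B *m Fs d *m P).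
Proof.
move=> BS PS BP lamB.
have PBK x : (x <= B)%MS -> x *m P *m B = x.
  by case/submxP=> D ->; rewrite -[D *m B *m P]mulmxA BP mulmx1.
have restrictE w x : (forall w', kword k w' -> (x *m Fword Fs w' <= B)%MS) ->
    kword k w -> x *m P *m Fword (fun d => B *m Fs d *m P) w = x *m Fword Fs w *m P.
  elim: w x => [|d w IH] x xB /=; first by rewrite !mulmx1.
  case/andP=> dk kw; have := xB [::] isT; rewrite mulmx1 => x_in_B.
  rewrite !mulmxA PBK // IH // => w' kw'.
  by rewrite -mulmxA; apply: (xB (d :: w')); rewrite /= dk.
case: rep => _ _ FsS _; split.
- by move=> j; rewrite (mxOverP (mxOverM lamS PS)).
- by move=> i; rewrite (mxOverP (mxOverM BS gamS)).
- by move=> d dk i j; rewrite (mxOverP (mxOverM (mxOverM BS _) PS)) //; apply/mxOverP/FsS.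
move=> n; rewrite fE !Fmat_Fword restrictE ?kword_digits //.
by rewrite mulmxA PBK // lamB // kword_digits.
Qed.

Lemma linrep_col_restrict s (C : 'M[R]_(r, s)) (Q : 'M[R]_(s, r)) :
  C \is a mxOver S -> Q \is a mxOver S -> Q *m C = 1%:M ->
  (forall m, exists c, Fmat Fs k m *m gam = C *m c) ->
  is_linrep S k f (lam *m C) (Q *m gam) (fun d => Q *m Fs d *m C).
Proof.
move=> CS QS QC gamC.
have CQK y : (exists c, y = C *m c) -> C *m (Q *m y) = y.
  by case=> c ->; rewrite [Q *m _]mulmxA QC mul1mx.
have restrictE m :
    Fmat (fun d => Q *m Fs d *m C) k m *m (Q *m gam) = Q *m (Fmat Fs k m *m gam).
  elim/ltn_ind: m => -[|m] IH; first by rewrite !mul1mx.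
  rewrite (Fmat_cons _ k2) // (Fmat_cons Fs k2) // -mulmxA IH ?ltn_Pdiv //.
  by rewrite -!mulmxA CQK // !mulmxA.
case: rep => _ _ FsS _; split.
- by move=> j; rewrite (mxOverP (mxOverM lamS CS)).
- by move=> i; rewrite (mxOverP (mxOverM QS gamS)).
- by move=> d dk i j; rewrite (mxOverP (mxOverM (mxOverM QS _) CS)) //; apply/mxOverP/FsS.
by move=> n; rewrite fE -!mulmxA restrictE CQK.
Qed.

Lemma linrep_concat w n m : kword k w -> (0 < n)%N ->
  f (undigits k (w ++ digits k n ++ digits k m)) =
  (lam *m Fword Fs w *m Fmat Fs k n *m (Fmat Fs k m *m gam)) 0 0.
Proof.
move=> kw n_gt0; rewrite fE Fmat_Fword digits_undigits_cat_digits //.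
by rewrite !Fword_cat !mulmxA.
Qed.

Lemma linrep_inO sigma ell :
  inO_mx (Fmat Fs k) (hfun sigma ell) -> inO f (hfun sigma ell).
Proof.
move=> FO; apply: (eq_inO (n1 := 0) _ (inO_mx_mul lam gam FO 0 0)) => n _.
by rewrite fE.
Qed.

Hypothesis minimal : forall {r'} {lam' : 'rV[R]_r'} {gam' Fs'},
  is_linrep S k f lam' gam' Fs' -> (r <= r')%N.

Lemma minimal_linrep_row_basis : exists2 B : 'M[R]_r, B \in unitmx &
  forall a, exists2 w, kword k w & row a B = lam *m Fword Fs w.
Proof.
have [s [B [freeB genB spanB]]] :=
  exists_row_basis (fun x => exists2 w, kword k w & x = lam *m Fword Fs w).
have BS : B \is a mxOver S.
  apply/mxOverP => a j; have [w kw /(congr1 (fun x : 'rV_r => x 0 j))] := genB a.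
  by rewrite mxE => ->; rewrite (mxOverP (mxOverM lamS (Fword_mxOver kw))).
have [P PS BP] := row_free_mxOver_rinv freeB BS.
have /minimal rs : is_linrep S k f (lam *m P) (B *m gam) (fun d => B *m Fs d *m P).
  by apply: linrep_row_restrict => // w kw; apply: spanB; exists w.
have sr : s = r by apply/eqP; rewrite eqn_leq rs andbT -(eqP freeB) rank_leq_col.
by move: B freeB genB {spanB BS P PS BP}; rewrite sr => B; rewrite row_free_unit; exists B.
Qed.

Lemma minimal_linrep_col_basis : exists2 C : 'M[R]_r, C \in unitmx &
  forall b, exists m, col b C = Fmat Fs k m *m gam.
Proof.
have [s [B [freeB genB spanB]]] :=
  exists_row_basis (fun x => exists m, x = (Fmat Fs k m *m gam)^T).
have BS : B \is a mxOver S.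
  apply/mxOverP => b j; have [m /(congr1 (fun x : 'rV_r => x 0 j))] := genB b.
  rewrite mxE => ->; rewrite mxE Fmat_Fword.
  by rewrite (mxOverP (mxOverM (Fword_mxOver (kword_digits k2 m)) gamS)).
have [P PS BP] := row_free_mxOver_rinv freeB BS.
have /minimal rs : is_linrep S k f (lam *m B^T) (P^T *m gam) (fun d => P^T *m Fs d *m B^T).
  apply: linrep_col_restrict; rewrite ?mxOver_trmx -?trmx_mul ?BP ?trmx1 // => m.
  have /submxP[D DE] : ((Fmat Fs k m *m gam)^T <= B)%MS by apply: spanB; exists m.
  by exists D^T; rewrite -trmx_mul -DE trmxK.
have sr : s = r by apply/eqP; rewrite eqn_leq rs andbT -(eqP freeB) rank_leq_col.
move: B freeB genB {spanB BS P PS BP}; rewrite sr => B freeB genB.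
exists B^T; first by rewrite unitmx_tr -row_free_unit.
by move=> b; have [m mE] := genB b; exists m; rewrite -tr_row mE trmxK.
Qed.

Lemma minimal_linrep_inO_mx sigma ell :
  inO f (hfun sigma ell) -> inO_mx (Fmat Fs k) (hfun sigma ell).
Proof.
move=> fO; have [B B_unit rowB] := minimal_linrep_row_basis.
have [C C_unit colC] := minimal_linrep_col_basis.
have -> : Fmat Fs k = fun n => invmx B *m (B *m Fmat Fs k n *m C) *m invmx C.
  by apply: funext => n; rewrite mulmxA mulmxK // mulKmx.
apply: inO_mx_mul => a b; have [w kw wE] := rowB a; have [m mE] := colC b.
apply: (eq_inO (n1 := 1) (g1 := fun n => f (undigits k (w ++ digits k n ++ digits k m)))).
  by move=> n n_gt0; rewrite linrep_concat // -wE -mE [RHS]mulmx_entry.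
apply: inO_comp fO => n n_gt0.
by apply: undigits_cat_digits_bounds => //; apply: kword_digits.
Qed.

End MinimalRepresentation.

Theorem proposition3p9 (R : realType) (S : pred R) (k : nat) (f : nat -> R)
  (r : nat) (lam : 'rV[R]_r) (gam : 'cV[R]_r) (Fs : nat -> 'M[R]_r)
  (sigma : R) (ell : nat) :
  (2 <= k)%N ->
  subfield_of_real_algebraic S ->
  is_k_regular S k f ->
  is_minimal_linrep S k f lam gam Fs ->
  (inO f (hfun sigma ell) <-> inO_mx (Fmat Fs k) (hfun sigma ell)) /\
  (exact_growth (inO f) sigma ell <->
   exact_growth (fun h => inO_mx (Fmat Fs k) h) sigma ell).
Proof.
move=> k2 [subfieldS _] _ [rep minimal].
have growth_iff s l : inO f (hfun s l) <-> inO_mx (Fmat Fs k) (hfun s l).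
  split; first exact: (minimal_linrep_inO_mx subfieldS k2 rep minimal).
  exact: (linrep_inO rep).
by split; [exact: growth_iff | exact: exact_growth_iff].
Qed.
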